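(* Let $G\curvearrowright X$ and $H\curvearrowright Y$ be group actions with $\mathrm{Con}(G\curvearrowright X)=\mathrm{Con}(H\curvearrowright Y)$. Then: (1) $X$ is finite (resp. infinite) if and only if $Y$ is finite (resp. infinite); (2) for every $n$, $|X|=n$ if and only if $|Y|=n$; (3) for every $n$, $|X|\ge n$ if and only if $|Y|\ge n$.
   Context: For an action $G\curvearrowright X$, an ordered tuple $\mathfrak{g}=(g_1,\dots,g_n)$ of elements of $G$ and a finite partition $\mathcal{E}=\{E_1,\dots,E_m\}$ of $X$ (a configuration pair), a configuration is a tuple $C=(C_0,\dots,C_n)\in\{1,\dots,m\}^{n+1}$ such that some $x\in E_{C_0}$ satisfies $g_i\cdot x\in E_{C_i}$ for $i=1,\dots,n$; the set of these is $\mathrm{Con}(\mathfrak{g},\mathcal{E};X)$. Then $\mathrm{Con}(G\curvearrowright X)=\{\mathrm{Con}(\mathfrak{g},\mathcal{E};X): (\mathfrak{g},\mathcal{E})\text{ a configuration pair}\}$. *)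

From Stdlib Require List.
From mathcomp Require Import all_boot.
Set Implicit Arguments. Unset Strict Implicit. Unset Printing Implicit Defensive.

Record grp_action (G X : Type) := GrpAction {
  gmul : G -> G -> G;
  gone : G;
  ginv : G -> G;
  gmulA : forall a b c, gmul a (gmul b c) = gmul (gmul a b) c;
  gmul1 : forall a, gmul gone a = a;
  gmulV : forall a, gmul (ginv a) a = gone;
  act : G -> X -> X;
  act1 : forall x, act gone x = x;
  actM : forall g h x, act (gmul g h) x = act g (act h x)
}.

(* A finite partition {E_1,...,E_m} of X is encoded by the labelling map
   p : X -> 'I_m (x lies in E_{p x + 1}); the blocks are nonempty, i.e. p is
   surjective. *)
Definition partition_map (X : Type) (m : nat) (p : X -> 'I_m) : Prop :=
  forall i : 'I_m, exists x, p x = i.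

Definition Con (G X : Type) (a : grp_action G X) (n : nat) (gs : n.-tuple G)
  (m : nat) (p : X -> 'I_m) : seq nat -> Prop :=
  fun C => exists x : X,
    C = (nat_of_ord (p x)).+1 :: [seq (nat_of_ord (p (act a g x))).+1 | g <- gs].

Definition ConAll (G X : Type) (a : grp_action G X) (S : seq nat -> Prop) : Prop :=
  exists (n : nat) (gs : n.-tuple G) (m : nat) (p : X -> 'I_m),
    partition_map p /\ (forall C, S C <-> Con a gs p C).

Definition is_finite (X : Type) : Prop := exists l : list X, forall x, List.In x l.

Definition has_card (X : Type) (n : nat) : Prop :=
  exists (f : 'I_n -> X) (g : X -> 'I_n), cancel f g /\ cancel g f.

Definition card_ge (X : Type) (n : nat) : Prop :=
  exists f : 'I_n -> X, injective f.

(* Taking the empty tuple of group elements, every partition of X into m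
   blocks has configuration set {(1), ..., (m)}; conversely, a configuration
   pair whose configurations are exactly (1), ..., (m) labels X by m nonempty
   blocks.  Hence Con(G ↷ X) determines the m for which X has a partition into
   m nonempty blocks, i.e. the m >= 1 with |X| >= m.  Finiteness and |X| = n
   are both expressible through the predicates |X| >= m. *)
From mathcomp Require Import all_boot.
From Stdlib Require Import ClassicalEpsilon Classical.
From Stdlib Require List.
Set Implicit Arguments. Unset Strict Implicit. Unset Printing Implicit Defensive.

Lemma surjective_right_inverse (A B : Type) (f : A -> B) :
  (forall y, exists x, f x = y) -> exists g : B -> A, cancel g f.
Proof.
move=> f_surj.
exists (fun y => proj1_sig (constructive_indefinite_description _ (f_surj y))).
by move=> y; case: constructive_indefinite_description.
Qed.

Lemma injective_left_inverse (A B : Type) (f : A -> B) (a0 : A) :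
  injective f -> exists g : B -> A, cancel f g.
Proof.
move=> f_inj.
exists (fun y => match excluded_middle_informative (exists x, f x = y) with
  | left fx_y => proj1_sig (constructive_indefinite_description _ fx_y)
  | right _ => a0 end).
move=> x; case: excluded_middle_informative => [fx_y | no_x]; last first.
  by case: no_x; exists x.
by case: constructive_indefinite_description => x' /= /f_inj.
Qed.

Lemma mem_In (T : eqType) (x : T) (s : seq T) : x \in s -> List.In x s.
Proof. by elim: s => //= y s IHs; rewrite in_cons => /orP [/eqP ->|/IHs]; auto. Qed.

Definition has_partition (X : Type) (m : nat) : Prop :=
  exists p : X -> 'I_m, partition_map p.

Definition singleton_configs (m : nat) : seq nat -> Prop :=
  fun C => exists i : 'I_m, C = [:: i.+1].

Lemma ConAll_singleton_configs (G X : Type) (a : grp_action G X) m :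
  ConAll a (singleton_configs m) <-> has_partition X m.
Proof.
split.
- case=> n [gs [m' [p [_ Con_p]]]].
  have p_lt y : p y < m.
    have [i [-> _]] : singleton_configs m
        ((p y).+1 :: [seq (p (act a g y)).+1 | g <- gs]).
      by apply/Con_p; exists y.
    exact: ltn_ord.
  exists (fun y => Ordinal (p_lt y)) => i.
  have [y [py_i]] : Con a gs p [:: i.+1] by apply/Con_p; exists i.
  by exists y; apply: val_inj.
- case=> p p_surj; exists 0, [tuple], m, p; split => // C; split.
  + by case=> i ->; have [x <-] := p_surj i; exists x.
  + by case=> x ->; exists (p x).
Qed.

Lemma card_ge0 (X : Type) : card_ge X 0.
Proof. by exists (fun i : 'I_0 => False_rect X (notF (ltn_ord i))); case. Qed.

Lemma card_ge_partition (X : Type) n : has_partition X n -> card_ge X n.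
Proof.
case=> p /surjective_right_inverse [g gK].
by exists g; apply: can_inj gK.
Qed.

Lemma partition_card_ge (X : Type) n : card_ge X n.+1 -> has_partition X n.+1.
Proof.
case=> f /(injective_left_inverse ord0) [g fK].
by exists g => i; exists (f i).
Qed.

Lemma card_geE (X : Type) n : card_ge X n <-> n = 0 \/ has_partition X n.
Proof.
case: n => [|n]; split.
- by left.
- by move=> _; apply: card_ge0.
- by move/partition_card_ge; right.
- by case=> // /card_ge_partition.
Qed.

Lemma card_ge_fresh (X : Type) k (f : 'I_k -> X) x :
  injective f -> (forall i, f i <> x) -> card_ge X k.+1.
Proof.
move=> f_inj fresh_x.
exists (fun i => if unlift ord_max i is Some j then f j else x).
move=> i j; case: unliftP => [i' ->|->]; case: unliftP => [j' ->|->] //.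
- by move/f_inj ->.
- by move/fresh_x.
- by move/esym/fresh_x.
Qed.

Lemma is_finiteE (X : Type) : is_finite X <-> exists n, ~ card_ge X n.
Proof.
split.
- case=> l l_full; exists (length l).+1; case=> f f_inj.
  pose g (j : 'I_(length l)) := List.nth j l (f ord0).
  have [h hK] : exists h, cancel h g.
    apply: surjective_right_inverse => x.
    have [j [/ltP lt_j <-]] := List.In_nth l x (f ord0) (l_full x).
    by exists (Ordinal lt_j).
  have hf_inj : injective (h \o f) by move=> i j /= /(can_inj hK) /f_inj.
  by have := inj_leq _ hf_inj; rewrite ltnn.
- case=> n not_ge; apply: NNPP => infinite; apply: not_ge.
  elim: n => [|k [f f_inj]]; first exact: card_ge0.
  have [x x_fresh] : exists x, ~ List.In x (List.map f (enum 'I_k)).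
    by apply: not_all_ex_not => covered; apply: infinite; exists (List.map f (enum 'I_k)).
  apply: (card_ge_fresh (x := x) f_inj) => i fi_x; apply: x_fresh; rewrite -fi_x.
  by apply/List.in_map/mem_In; rewrite mem_enum.
Qed.

Lemma has_cardE (X : Type) n : has_card X n <-> card_ge X n /\ ~ card_ge X n.+1.
Proof.
split.
- case=> f [g [fK gK]]; split; first by exists f; apply: can_inj fK.
  case=> h h_inj.
  have gh_inj : injective (g \o h) by move=> i j /= /(can_inj gK) /h_inj.
  by have := inj_leq _ gh_inj; rewrite ltnn.
- case=> [[f f_inj] not_ge].
  have [g gK] : exists g, cancel g f.
    apply: surjective_right_inverse => x; apply: NNPP => x_fresh.
    by apply: not_ge; apply: (card_ge_fresh (x := x) f_inj) => i fi_x; apply: x_fresh; exists i.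
  by exists f, g; split=> // i; apply: f_inj; rewrite gK.
Qed.

Theorem mainTheorem2 (G X H Y : Type) (a : grp_action G X) (b : grp_action H Y)
  (hCon : forall S : seq nat -> Prop, ConAll a S <-> ConAll b S) :
  ((is_finite X <-> is_finite Y) /\ (~ is_finite X <-> ~ is_finite Y)) /\
  (forall n : nat, has_card X n <-> has_card Y n) /\
  (forall n : nat, card_ge X n <-> card_ge Y n).
Proof.
have card_ge_XY n : card_ge X n <-> card_ge Y n.
  by rewrite !card_geE -(ConAll_singleton_configs a) -(ConAll_singleton_configs b) hCon.
have finite_XY : is_finite X <-> is_finite Y.
  by rewrite !is_finiteE; split=> -[n]; exists n; rewrite ?card_ge_XY // -card_ge_XY.
split; first by split=> //; rewrite finite_XY.
by split=> // n; rewrite !has_cardE !card_ge_XY.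
Qed.
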